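(* Let $X\subseteq\mathbb{R}^n$ be a nonempty closed convex set with $0\in X$, $\|\cdot\|$ the Euclidean norm, $D(x\|x')=\tfrac12\|x-x'\|^2$, and suppose $\max_{x,x'\in X}D(x\|x')\le F^2$. Let $\tau\in\mathbb{N}$, $T\in\mathbb{N}$, and let $f_1,\dots,f_{T+\tau}:\mathbb{R}^n\to\mathbb{R}$ be convex differentiable functions with $\|\nabla f_t(x)\|\le L$ for all $x\in X$ and all $t$. Let $x^*\in X$ be a minimizer over $X$ of $f^*(x)=\frac1T\sum_{t=1}^Tf_t(x)$, and suppose each $f_t$ is strongly convex with parameter $\lambda>0$ in the sense that $f_t(x^* )\ge f_t(x)+\langle x^*-x,\nabla f_t(x)\rangle+\frac{\lambda}{2}\|x-x^*\|^2$ for all $x\in X$. Run delayed stochastic gradient descent: $x_1=\dots=x_{\tau+1}=0$, $g_t=\nabla f_t(x_t)$, and for $t=\tau+1,\dots,T+\tau$, $x_{t+1}=\operatorname{argmin}_{x\in X}\|x-(x_t-\eta_tg_{t-\tau})\|$, with learning rate $\eta_t=\frac{1}{\lambda(t-\tau)}$ for $t>\tau$ and $\eta_t=0$ for $t\le\tau$. Then the regret $R[X]=\sum_{t=1}^T\big(f_t(x_t)-f_t(x^* )\big)$ satisfies $$R[X]\le \lambda\tau F^2+\Big[\tfrac12+\tau\Big]\frac{L^2}{\lambda}\big(1+\tau+\log T\big).$$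
   Context: $\log$ denotes the natural logarithm. *)

From HB Require Import structures.
From mathcomp Require Import all_boot all_order all_algebra.
From mathcomp Require Import all_classical all_reals all_analysis.
Set Implicit Arguments. Unset Strict Implicit. Unset Printing Implicit Defensive.
Import Order.TTheory GRing.Theory Num.Theory.
Import numFieldNormedType.Exports.
Local Open Scope ring_scope.
Local Open Scope classical_set_scope.

Definition dotv (R : realType) (n : nat) (u v : 'rV[R]_n) : R :=
  \sum_(i < n) u ord0 i * v ord0 i.

Definition enorm (R : realType) (n : nat) (u : 'rV[R]_n) : R :=
  Num.sqrt (dotv u u).

Definition Dsq (R : realType) (n : nat) (x x' : 'rV[R]_n) : R :=
  2^-1 * enorm (x - x') ^+ 2.

Definition convex_setv (R : realType) (n : nat) (X : set 'rV[R]_n) : Prop :=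
  forall x y, X x -> X y -> forall a : R, 0 <= a <= 1 ->
    X (a *: x + (1 - a) *: y).

Definition convex_funv (R : realType) (n : nat) (f : 'rV[R]_n -> R) : Prop :=
  forall x y (a : R), 0 <= a <= 1 ->
    f (a *: x + (1 - a) *: y) <= a * f x + (1 - a) * f y.

Definition is_gradient (R : realType) (n : nat) (f : 'rV[R]_n -> R)
  (x g : 'rV[R]_n) : Prop :=
  differentiable f x /\ forall v, 'd f x v = dotv g v.

From HB Require Import structures.
From mathcomp Require Import all_boot all_order all_algebra.
From mathcomp Require Import all_classical all_reals all_analysis.
From mathcomp Require Import ring lra zify.
Import Order.TTheory GRing.Theory Num.Theory.
Import numFieldNormedType.Exports.
Local Open Scope ring_scope.
Local Open Scope classical_set_scope.

(* Strong convexity bounds the loss of round t by <x_t - x*, g_t> - lambda/2 |x_t - x*|^2.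
   The gradient g_t is only applied at round t + tau, to x_{t+tau}: since the projection onto X
   does not increase distances to points of X, <x_{t+tau} - x*, g_t> telescopes in the weighted
   distances lambda t/2 |x_{t+tau} - x*|^2 up to L^2/(2 lambda t), while the drift
   <x_t - x_{t+tau}, g_t> costs at most L^2/lambda times the tau intermediate learning rates.
   Abel summation of the telescope leaves tau boundary distances (each at most 2F^2) once the
   -lambda/2 terms are used, and every sum of learning rates is a harmonic sum, at most 1 + log T. *)

Section EuclideanSpace.
Context {R : realType} {n : nat}.
Implicit Types (u v w : 'rV[R]_n).

Lemma dotvC u v : dotv u v = dotv v u.
Proof. by apply: eq_bigr => i _; rewrite mulrC. Qed.

Lemma dotvDl u v w : dotv (u + v) w = dotv u w + dotv v w.
Proof. by rewrite /dotv -big_split; apply: eq_bigr => i _; rewrite !mxE mulrDl. Qed.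

Lemma dotvZl a u v : dotv (a *: u) v = a * dotv u v.
Proof. by rewrite /dotv mulr_sumr; apply: eq_bigr => i _; rewrite !mxE mulrA. Qed.

Lemma dotvNl u v : dotv (- u) v = - dotv u v.
Proof. by rewrite -scaleN1r dotvZl mulN1r. Qed.

Lemma dotvDr u v w : dotv w (u + v) = dotv w u + dotv w v.
Proof. by rewrite dotvC dotvDl !(dotvC w). Qed.

Lemma dotvZr a u v : dotv v (a *: u) = a * dotv v u.
Proof. by rewrite dotvC dotvZl dotvC. Qed.

Lemma dotvNr u v : dotv v (- u) = - dotv v u.
Proof. by rewrite dotvC dotvNl dotvC. Qed.

Lemma dotv0l v : dotv 0 v = 0.
Proof. by rewrite -(scale0r 0) dotvZl mul0r. Qed.

Lemma dotvvDD u v : dotv (u + v) (u + v) = dotv u u + 2 * dotv u v + dotv v v.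
Proof. by rewrite dotvDl !dotvDr (dotvC v u); ring. Qed.

Lemma dotvvBB u v : dotv (u - v) (u - v) = dotv u u - 2 * dotv u v + dotv v v.
Proof. by rewrite dotvvDD dotvNr dotvNl dotvNr opprK; ring. Qed.

Lemma dotvv_ge0 u : 0 <= dotv u u.
Proof. by apply: sumr_ge0 => i _; rewrite -expr2 sqr_ge0. Qed.

Lemma enorm_ge0 u : 0 <= enorm u.
Proof. exact: sqrtr_ge0. Qed.

Lemma enorm_sqr u : enorm u ^+ 2 = dotv u u.
Proof. by rewrite sqr_sqrtr // dotvv_ge0. Qed.

Lemma enorm0 : enorm (0 : 'rV[R]_n) = 0.
Proof. by rewrite /enorm dotv0l sqrtr0. Qed.

Lemma enormZ a u : enorm (a *: u) = `|a| * enorm u.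
Proof. by rewrite /enorm dotvZl dotvZr mulrA -expr2 sqrtrM ?sqr_ge0 // sqrtr_sqr. Qed.

Lemma enormB_sym u v : enorm (u - v) = enorm (v - u).
Proof. by rewrite -opprB -scaleN1r enormZ normrN1 mul1r. Qed.

(* The discriminant of [t |-> |u + t v|^2] is nonpositive. *)
Lemma dotv_Cauchy_Schwarz u v : dotv u v ^+ 2 <= dotv u u * dotv v v.
Proof.
set A := dotv u u; set B := dotv u v; set C := dotv v v.
have quad_ge0 t : 0 <= A + 2 * t * B + t ^+ 2 * C.
  have := dotvv_ge0 (u + t *: v).
  by rewrite dotvvDD dotvZr dotvZl dotvZr -/A -/B -/C; congr (_ <= _); ring.
have [C_gt0|C_le0] := ltrP 0 C.
  have := quad_ge0 (- B / C).
  have -> : A + 2 * (- B / C) * B + (- B / C) ^+ 2 * C = A - B ^+ 2 / C.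
    by field; rewrite gt_eqF.
  by rewrite subr_ge0 ler_pdivrMr.
have C0 : C = 0 by apply/eqP; rewrite eq_le C_le0 dotvv_ge0.
rewrite C0 mulr0; have [->|B_neq0] := eqVneq B 0; first by rewrite expr0n.
have := quad_ge0 (- (A + 1) / (2 * B)); rewrite C0 mulr0 addr0.
have -> : A + 2 * (- (A + 1) / (2 * B)) * B = -1 by field.
by rewrite ler0N1.
Qed.

Lemma dotv_le_enorm u v : dotv u v <= enorm u * enorm v.
Proof.
have [uv_le0|uv_gt0] := lerP (dotv u v) 0.
  by apply: le_trans uv_le0 _; rewrite mulr_ge0 // enorm_ge0.
rewrite -(ler_pXn2r (n := 2)) //; last by rewrite nnegrE mulr_ge0 ?enorm_ge0.
  by rewrite exprMn !enorm_sqr dotv_Cauchy_Schwarz.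
by rewrite nnegrE ltW.
Qed.

End EuclideanSpace.

Lemma ge0_of_perturbation_ge0 {R : realFieldType} (c d : R) :
  (forall a, 0 < a <= 1 -> 0 <= c + a * d) -> 0 <= c.
Proof.
move=> pert_ge0; have [d_le0|d_gt0] := lerP d 0.
  by have := pert_ge0 1; rewrite ltr01 lexx => /(_ isT); lra.
rewrite leNgt; apply/negP => c_lt0.
set a := Num.min 1 (- c / (2 * d)).
have a_gt0 : 0 < a by rewrite lt_min ltr01 divr_gt0 ?oppr_gt0 ?mulr_gt0.
have ad_le : a * d <= - c / 2.
  by rewrite -ler_pdivlMr // -mulrA -invfM mulrC /a ge_min mulrC lexx orbT.
have := pert_ge0 a; rewrite a_gt0 ge_min lexx /= => /(_ isT); lra.
Qed.

Section Projection.
Context {R : realType} {n : nat} {X : set 'rV[R]_n}.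
Hypothesis convX : convex_setv X.
Context {z p : 'rV[R]_n}.
Hypotheses (Xp : X p) (p_min : forall w, X w -> enorm (p - z) <= enorm (w - z)).

(* Moving from [p] towards [y] along the segment cannot decrease the distance to [z]. *)
Lemma proj_variational y : X y -> 0 <= dotv (p - z) (y - p).
Proof.
move=> Xy; suff /ge0_of_perturbation_ge0 : forall a, 0 < a <= 1 ->
    0 <= 2 * dotv (p - z) (y - p) + a * dotv (y - p) (y - p).
  by rewrite pmulr_rge0.
move=> a /andP[a_gt0 a_le1].
have Xw : X (a *: y + (1 - a) *: p) by apply: convX; rewrite ?(ltW a_gt0).
have := p_min _ Xw; rewrite -(ler_pXn2r (n := 2)) ?nnegrE ?enorm_ge0 //.
have -> : a *: y + (1 - a) *: p - z = (p - z) + a *: (y - p).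
  by apply/rowP => i; rewrite !mxE; ring.
rewrite !enorm_sqr (dotvvDD (p - z)) !(dotvZl, dotvZr) -subr_ge0.
set c := dotv _ (y - p); set d := dotv (y - p) _.
have -> : dotv (p - z) (p - z) + 2 * (a * c) + a * (a * d) - dotv (p - z) (p - z)
    = a * (2 * c + a * d) by ring.
by rewrite pmulr_rge0.
Qed.

Lemma proj_sqdist_le y : X y -> dotv (p - y) (p - y) <= dotv (z - y) (z - y).
Proof.
move=> Xy; have := proj_variational y Xy; have := dotvv_ge0 (z - p).
have -> : z - y = (z - p) + (p - y) by apply/rowP => i; rewrite !mxE; ring.
rewrite (dotvvDD (z - p)).
have -> : dotv (z - p) (p - y) = dotv (p - z) (y - p).
  by rewrite -[z - p]opprB -[p - y]opprB dotvNl dotvNr opprK.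
lra.
Qed.

End Projection.

Section ProjectedStep.
Context {R : realType} {n : nat} {X : set 'rV[R]_n}.
Hypothesis convX : convex_setv X.
Context {x g p : 'rV[R]_n} {eta : R}.
Hypotheses (Xp : X p)
  (p_min : forall w, X w -> enorm (p - (x - eta *: g)) <= enorm (w - (x - eta *: g))).

Lemma proj_step_sqdist y : X y ->
  dotv (p - y) (p - y) <=
    dotv (x - y) (x - y) - 2 * eta * dotv (x - y) g + eta ^+ 2 * dotv g g.
Proof.
move=> Xy; apply: le_trans (proj_sqdist_le convX Xp p_min y Xy) _.
have -> : x - eta *: g - y = (x - y) - eta *: g by apply/rowP => i; rewrite !mxE; ring.
rewrite (dotvvBB (x - y)) !(dotvZl, dotvZr).
by rewrite !mulrA -expr2.
Qed.

Lemma proj_step_le : X x -> 0 <= eta -> enorm (x - p) <= eta * enorm g.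
Proof.
move=> Xx eta_ge0.
rewrite -(ler_pXn2r (n := 2)) ?nnegrE ?mulr_ge0 ?enorm_ge0 //.
rewrite exprMn enormB_sym !enorm_sqr; have := proj_step_sqdist _ Xx.
by rewrite subrr !dotv0l mulr0 subr0 add0r.
Qed.

End ProjectedStep.

Section HarmonicSeries.
Variable R : realType.

Lemma harmonic_series_le_1Dln m : (0 < m)%N -> series (@harmonic R) m <= 1 + ln m%:R.
Proof.
case: m => // m _; elim: m => [|m IH]; first by rewrite /series /= big_nat1 invr1 ln1 addr0.
rewrite seriesSr /=.
have ln_step : (m.+2%:R : R)^-1 <= ln m.+2%:R - ln m.+1%:R.
  have : ln (m.+1%:R / m.+2%:R) <= - (m.+2%:R : R)^-1.
    have -> : (m.+1%:R : R) / m.+2%:R = 1 + - (m.+2%:R)^-1.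
      by rewrite -[m.+1%:R](addrK 1) natr1 mulrBl divff ?mul1r ?pnatr_eq0.
    by apply: (@le_ln1Dx _ (- _)); rewrite ltrN2 invf_lt1 ?ltr1n.
  by rewrite ln_div ?posrE ?ltr0n // -opprB lerNr opprK.
apply: le_trans (lerD IH ln_step) _.
by rewrite -addrA lerD2l addrC subrK.
Qed.

Lemma series_harmonic_le m m' : (m <= m')%N ->
  series (@harmonic R) m <= series (@harmonic R) m'.
Proof.
by apply: (nondecreasing_series (P := xpredT) (m := 0)) => k _ _; exact: harmonic_ge0.
Qed.

(* [lambda * eta_j] for the paper's learning rate [eta_j], which vanishes in the first [tau] rounds. *)
Definition delay_rate (tau j : nat) : R := if (j <= tau)%N then 0 else (j - tau)%:R^-1.

Lemma sum_delay_rate tau k N : (k <= tau)%N ->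
  \sum_(s < N) delay_rate tau (s + k) = series (@harmonic R) (N + k - tau.+1)%N.
Proof.
move=> k_le; elim: N => [|N IH].
  by rewrite big_ord0 (_ : (0 + k - tau.+1 = 0)%N) ?/series /= ?big_geq //; lia.
rewrite big_ord_recr /= IH /delay_rate; case: ifP => [s_le|/negbT s_gt].
  by rewrite addr0 (_ : (N + k - tau.+1 = N.+1 + k - tau.+1)%N) //; lia.
rewrite (_ : (N.+1 + k - tau.+1 = (N + k - tau.+1).+1)%N); last lia.
by rewrite seriesSr /= (_ : ((N + k - tau.+1).+1 = N + k - tau)%N) //; lia.
Qed.

Lemma sum_delay_rate_le tau T : (0 < T)%N ->
  \sum_(s < T) \sum_(i < tau) delay_rate tau (s + i.+1) <= tau%:R * (1 + ln T%:R).
Proof.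
move=> T_gt0; rewrite exchange_big /=.
apply: le_trans (_ : _ <= \sum_(i < tau) (1 + ln T%:R)) _; last first.
  by rewrite sumr_const card_ord mulr_natl.
apply: ler_sum => i _; rewrite sum_delay_rate //.
apply: le_trans (harmonic_series_le_1Dln T T_gt0).
by apply: series_harmonic_le; have := ltn_ord i; lia.
Qed.

End HarmonicSeries.

Section Summation.
Context {R : numDomainType}.
Implicit Types (a b D : nat -> R).

Lemma sumr_telescope a N : \sum_(i < N) (a i.+1 - a i) = a N - a 0%N.
Proof. by rewrite -(big_mkord xpredT (fun i => a i.+1 - a i)) telescope_sumr. Qed.

(* Both sides telescope the double sum of [b (s + i.+1) - b (s + i)] over [s < N], [i < tau]. *)
Lemma sumr_shift b tau N :
  \sum_(s < N) (b (s + tau)%N - b s) = \sum_(i < tau) (b (N + i)%N - b i).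
Proof.
transitivity (\sum_(s < N) \sum_(i < tau) (b (s + i.+1)%N - b (s + i)%N)).
  by apply: eq_bigr => s _; rewrite (sumr_telescope (fun i => b (s + i)%N)) addn0.
rewrite exchange_big; apply: eq_bigr => i _ /=.
under eq_bigr do rewrite -addSnnS.
by rewrite (sumr_telescope (fun s => b (s + i)%N)) addnC.
Qed.

Lemma sumr_Abel a N :
  \sum_(s < N) s.+1%:R * (a s - a s.+1) = \sum_(s < N) a s - N%:R * a N.
Proof.
elim: N => [|N IH]; first by rewrite !big_ord0 mul0r subr0.
by rewrite !big_ord_recr /= IH -[N.+1]addn1 natrD; ring.
Qed.

Lemma sum_weighted_descent_le {D} {B : R} {tau T} :
  (forall j, 0 <= D j) -> (forall j, (1 <= j <= T + tau)%N -> D j <= B) ->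
  \sum_(s < T) (s.+1%:R * (D (s.+1 + tau)%N - D (s.+2 + tau)%N) - D s.+1)
    <= tau%:R * B.
Proof.
move=> D_ge0 D_le; rewrite sumrB (sumr_Abel (fun s => D (s.+1 + tau)%N)).
rewrite addrAC -sumrB (sumr_shift (fun j => D j.+1)).
apply: le_trans (_ : _ <= \sum_(i < tau) B) _; last by rewrite sumr_const card_ord mulr_natl.
rewrite -[leRHS]subr0; apply: lerB; last by rewrite mulr_ge0.
apply: ler_sum => i _; rewrite lerBlDr; apply: ler_wpDr => //.
by apply: D_le; have := ltn_ord i; lia.
Qed.

End Summation.

(* [D] and [D'] are the squared distances to [x*] before and after a step of size [1 / (lam s)]. *)
Lemma descent_inner_le {R : realFieldType} {D D' G q L2 lam s : R} :
  0 < lam -> 0 < s ->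
  D' <= D - 2 * (lam * s)^-1 * G + (lam * s)^-1 ^+ 2 * q -> q <= L2 ->
  G <= lam * s / 2 * (D - D') + L2 / lam / 2 * s^-1.
Proof.
move=> lam_gt0 s_gt0 step q_le.
set e := (lam * s)^-1 in step *.
have e_gt0 : 0 < e by rewrite invr_gt0 mulr_gt0.
have eq_le_eL : e ^+ 2 * q <= e ^+ 2 * L2 by rewrite ler_wpM2l ?sqr_ge0.
have -> : lam * s / 2 * (D - D') + L2 / lam / 2 * s^-1
    = lam * s / 2 * (D - D' + e ^+ 2 * L2) by rewrite /e; field; rewrite !gt_eqF.
have -> : G = lam * s / 2 * (2 * e * G) by rewrite /e; field; rewrite !gt_eqF.
apply: ler_wpM2l; first by rewrite divr_ge0 ?mulr_ge0 ?ltW.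
by move: step eq_le_eL; generalize (2 * e * G) (e ^+ 2 * q) (e ^+ 2 * L2) => a b c; lra.
Qed.

Lemma regret_bound_arith {R : realFieldType} (lam k tau F2 lnT A H S : R) :
  0 < lam -> 0 <= k -> 0 <= tau ->
  A <= tau * (2 * F2) -> H <= 1 + lnT -> S <= tau * (1 + lnT) ->
  lam / 2 * A + k / 2 * H + k * S <= lam * tau * F2 + (2^-1 + tau) * k * (1 + tau + lnT).
Proof.
move=> lam_gt0 k_ge0 tau_ge0 A_le H_le S_le.
have lam_half_ge0 : 0 <= lam / 2 by rewrite divr_ge0 // ltW.
have k_half_ge0 : 0 <= k / 2 by rewrite divr_ge0.
apply: le_trans (lerD (lerD (ler_wpM2l lam_half_ge0 A_le) (ler_wpM2l k_half_ge0 H_le))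
  (ler_wpM2l k_ge0 S_le)) _.
rewrite -subr_ge0.
have -> : lam * tau * F2 + (2^-1 + tau) * k * (1 + tau + lnT)
    - (lam / 2 * (tau * (2 * F2)) + k / 2 * (1 + lnT) + k * (tau * (1 + lnT)))
    = (2^-1 + tau) * k * tau by field.
by apply: mulr_ge0 => //; apply: mulr_ge0 => //; apply: addr_ge0.
Qed.

Section DelayedGradientDescent.
Context {R : realType} {n : nat} {X : set 'rV[R]_n} {L lambda : R} {tau T : nat}.
Context {f : nat -> 'rV[R]_n -> R} {grad : nat -> 'rV[R]_n -> 'rV[R]_n}.
Context {xstar : 'rV[R]_n} {x : nat -> 'rV[R]_n}.
Hypotheses (convX : convex_setv X) (X0 : X 0) (Xxstar : X xstar) (lambda_gt0 : 0 < lambda).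
Hypothesis grad_le : forall t, (1 <= t <= T + tau)%N -> forall y, X y -> enorm (grad t y) <= L.
Hypothesis strongly_convex : forall t, (1 <= t <= T + tau)%N -> forall y, X y ->
  f t xstar >= f t y + dotv (xstar - y) (grad t y) + lambda / 2 * enorm (y - xstar) ^+ 2.
Hypothesis x_init : forall t, (1 <= t <= tau.+1)%N -> x t = 0.
Hypothesis x_step : forall t, (tau.+1 <= t <= T + tau)%N ->
  let eta := (lambda * (t - tau)%:R)^-1 in
  let z := x t - eta *: grad (t - tau)%N (x (t - tau)%N) in
  X (x t.+1) /\ forall y, X y -> enorm (x t.+1 - z) <= enorm (y - z).

Lemma iterate_in_X t : (1 <= t <= T + tau + 1)%N -> X (x t).
Proof.
case: t => [//|t] /andP[_ t_le].
have [t_le_tau|t_gt_tau] := leqP t.+1 tau.+1; first by rewrite x_init ?t_le_tau.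
by case: (x_step t) => //; apply/andP; split; [exact: t_gt_tau | move: t_le; rewrite addn1 ltnS].
Qed.

Lemma grad_sqr_le t y : (1 <= t <= T + tau)%N -> X y -> dotv (grad t y) (grad t y) <= L ^+ 2.
Proof.
move=> t_range Xy; have gL := grad_le _ t_range _ Xy.
by rewrite -enorm_sqr ler_pXn2r ?nnegrE ?enorm_ge0 // (le_trans (enorm_ge0 _) gL).
Qed.

Lemma iterate_step_le j : (1 <= j <= T + tau)%N ->
  enorm (x j - x j.+1) <= L / lambda * delay_rate R tau j.
Proof.
move=> j_range; rewrite /delay_rate; have [j_le|j_gt] := leqP j tau.
  by rewrite !x_init ?subrr ?enorm0 ?mulr0 //; lia.
have [Xx' x'_min] := x_step j ltac:(lia).
have eta_ge0 : 0 <= (lambda * (j - tau)%:R)^-1 by rewrite invr_ge0 mulr_ge0 // ltW.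
have Xxj : X (x j) by apply: iterate_in_X; lia.
apply: le_trans (proj_step_le convX Xx' x'_min Xxj eta_ge0) _.
have gL : enorm (grad (j - tau) (x (j - tau))) <= L.
  by apply: grad_le; [lia | apply: iterate_in_X; lia].
rewrite invfM [_ * enorm _]mulrC mulrA.
by rewrite !ler_pM2r ?invr_gt0 ?ltr0n ?subn_gt0.
Qed.

Let k := L ^+ 2 / lambda.

Lemma delay_drift_le s m : (s < T)%N -> (m <= tau)%N ->
  dotv (x s.+1 - x (s.+1 + m)%N) (grad s.+1 (x s.+1))
    <= k * \sum_(i < m) delay_rate R tau (s + i.+1).
Proof.
move=> s_lt; elim: m => [|m IH] m_le; first by rewrite addn0 subrr dotv0l big_ord0 mulr0.
have -> : x s.+1 - x (s.+1 + m.+1)%N =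
    (x s.+1 - x (s.+1 + m)%N) + (x (s.+1 + m)%N - x (s.+1 + m)%N.+1).
  by rewrite addnS; apply/rowP => i; rewrite !mxE; ring.
rewrite dotvDl big_ord_recr /= mulrDr lerD ?IH //; first lia.
apply: le_trans (dotv_le_enorm _ _) _.
have gL : enorm (grad s.+1 (x s.+1)) <= L by apply: grad_le; [lia | apply: iterate_in_X; lia].
have step : enorm (x (s.+1 + m)%N - x (s.+1 + m).+1) <= L / lambda * delay_rate R tau (s.+1 + m).
  by apply: iterate_step_le; lia.
apply: le_trans (ler_pM (enorm_ge0 _) (enorm_ge0 _) step gL) _.
by rewrite addSnnS /k mulrAC [L / lambda * L]mulrAC -expr2.
Qed.

Let D j := dotv (x j - xstar) (x j - xstar).

Lemma regret_round_le s : (s < T)%N ->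
  f s.+1 (x s.+1) - f s.+1 xstar <=
    lambda / 2 * (s.+1%:R * (D (s.+1 + tau)%N - D (s.+2 + tau)%N) - D s.+1)
    + k / 2 * s.+1%:R^-1 + k * \sum_(i < tau) delay_rate R tau (s + i.+1).
Proof.
move=> s_lt; set g := grad s.+1 (x s.+1).
have Xxs : X (x s.+1) by apply: iterate_in_X; lia.
have sc := strongly_convex s.+1 ltac:(lia) _ Xxs.
rewrite -[xstar - _]opprB dotvNl enorm_sqr -/(D s.+1) -/g in sc.
have [Xx' x'_min] := x_step (s.+1 + tau)%N ltac:(lia).
rewrite addnK in x'_min.
have gL2 := grad_sqr_le s.+1 (x s.+1) ltac:(lia) Xxs.
have descent := descent_inner_le lambda_gt0 (ltr0Sn _ s)
  (proj_step_sqdist convX Xx' x'_min xstar Xxstar) gL2.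
have drift := delay_drift_le s tau s_lt (leqnn tau).
have split_g : dotv (x s.+1 - xstar) g =
    dotv (x (s.+1 + tau)%N - xstar) g + dotv (x s.+1 - x (s.+1 + tau)%N) g.
  by rewrite -dotvDl; congr dotv; apply/rowP => i; rewrite !mxE; ring.
rewrite -/(D (s.+1 + tau)%N) -/(D (s.+1 + tau).+1) -/g -/k in descent drift.
rewrite addSn; move: sc descent drift; rewrite split_g.
set Dd := lambda * _ / 2 * _ + _; set Dr := k * _.
have -> : lambda / 2 * (s.+1%:R * (D (s.+1 + tau)%N - D (s.+1 + tau).+1) - D s.+1)
    + k / 2 * s.+1%:R^-1 + Dr = Dd + Dr - lambda / 2 * D s.+1 by rewrite /Dd; ring.
by move: (f s.+1 (x s.+1)) (f s.+1 xstar) => a b; lra.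
Qed.

End DelayedGradientDescent.

Theorem theorem4 (R : realType) (n : nat) (X : set 'rV[R]_n) (F L lambda : R)
  (tau T : nat)
  (f : nat -> 'rV[R]_n -> R) (grad : nat -> 'rV[R]_n -> 'rV[R]_n)
  (xstar : 'rV[R]_n) (x : nat -> 'rV[R]_n) :
  closed X -> convex_setv X -> X 0 ->
  (forall y y', X y -> X y' -> Dsq y y' <= F ^+ 2) ->
  (0 < T)%N ->
  (forall t, (1 <= t <= T + tau)%N -> convex_funv (f t)) ->
  (forall t, (1 <= t <= T + tau)%N -> forall y, is_gradient (f t) y (grad t y)) ->
  (forall t, (1 <= t <= T + tau)%N -> forall y, X y -> enorm (grad t y) <= L) ->
  X xstar ->
  (forall y, X y ->
     T%:R^-1 * \sum_(1 <= t < T.+1) f t xstar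
       <= T%:R^-1 * \sum_(1 <= t < T.+1) f t y) ->
  0 < lambda ->
  (forall t, (1 <= t <= T + tau)%N -> forall y, X y ->
     f t xstar >= f t y + dotv (xstar - y) (grad t y)
                  + lambda / 2 * enorm (y - xstar) ^+ 2) ->
  (forall t, (1 <= t <= tau.+1)%N -> x t = 0) ->
  (forall t, (tau.+1 <= t <= T + tau)%N ->
     let eta := (lambda * (t - tau)%:R)^-1 in
     let z := x t - eta *: grad (t - tau)%N (x (t - tau)%N) in
     X (x t.+1) /\ forall y, X y -> enorm (x t.+1 - z) <= enorm (y - z)) ->
  \sum_(1 <= t < T.+1) (f t (x t) - f t xstar)
    <= lambda * tau%:R * F ^+ 2
       + (2^-1 + tau%:R) * (L ^+ 2 / lambda) * (1 + tau%:R + ln T%:R).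
Proof.
move=> _ convX X0 diam_le T_gt0 _ _ grad_le Xxstar _ lambda_gt0 strongly_convex x_init x_step.
pose D j := dotv (x j - xstar) (x j - xstar); pose k := L ^+ 2 / lambda.
have D_le j : (1 <= j <= T + tau)%N -> D j <= 2 * F ^+ 2.
  move=> j_range; have Xxj : X (x j) by apply: (iterate_in_X X0 x_init x_step); lia.
  by have := diam_le _ _ Xxj Xxstar; rewrite /Dsq enorm_sqr /D; lra.
have round := regret_round_le convX X0 Xxstar lambda_gt0 grad_le strongly_convex x_init x_step.
rewrite big_add1 /= big_mkord.
apply: le_trans (ler_sum _ (fun (s : 'I_T) _ => round s (ltn_ord s))) _.
rewrite !big_split /= -!mulr_sumr -/k.
have descent := sum_weighted_descent_le (fun j => dotvv_ge0 (x j - xstar)) D_le.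
have harmonic_le := harmonic_series_le_1Dln R T T_gt0.
have delay_le := sum_delay_rate_le R tau T T_gt0.
rewrite seriesEord /= in harmonic_le.
apply: regret_bound_arith => //; first by rewrite divr_ge0 ?sqr_ge0 // ltW.
Qed.
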